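(* Let $G$ be a profinite group and $H\subseteq G$ an open subgroup (of finite index). Let $X$ and $Y$ be discrete $G$-modules and let $f:X\to Y$ be a homomorphism that is $H$-linear (but not necessarily $G$-linear). Define the $G$-linear map $\tilde f:X\to Y$ by $\tilde f(x)=\sum_{gH\in G/H}g f g^{-1}(x)$. Then for every $n\geq 0$ and every $\sigma\in H^n(G,X)$, $$\operatorname{Cor}_H^G\big(f_*\operatorname{Res}_H^G\sigma\big)=\tilde f_*\sigma.$$
   Context: $\operatorname{Res}_H^G$ and $\operatorname{Cor}_H^G$ denote restriction and corestriction in continuous group cohomology; $f_*$ denotes the map on cohomology induced by a module homomorphism. The term $gfg^{-1}$ depends only on the coset $gH$ since $f$ is $H$-linear. *)

From HB Require Import structures.
From mathcomp Require Import all_boot all_algebra.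
From mathcomp Require monoid.
From mathcomp Require Import all_classical topology.

Set Implicit Arguments.
Unset Strict Implicit.
Unset Printing Implicit Defensive.

Import GRing.Theory.
Local Open Scope classical_set_scope.
Local Open Scope ring_scope.

(* A group carrying a topology (continuity axioms are imposed in [profinite]). *)
#[short(type="topGroupType")]
HB.structure Definition TopGroup := {G of monoid.Group G & Topological G}.

Section Defs.
Variable G : topGroupType.

Local Notation "x ** y" := (@monoid.mul G x y) (at level 40, left associativity).
Local Notation "x ^-1g" := (@monoid.inv G x) (at level 3).
Local Notation one := (@monoid.one G).

Definition profinite : Prop :=
  [/\ continuous (fun p : G * G => p.1 ** p.2),
      continuous (fun x : G => x ^-1g),
      compact [set: G], hausdorff_space G & totally_disconnected [set: G]].

Definition open_subgroup (H : set G) : Prop :=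
  [/\ H one, (forall x y, H x -> H y -> H (x ** y)),
      (forall x, H x -> H (x ^-1g)) & open H].

(* Discrete G-module: abelian group X with a G-action by additive maps,
   such that every stabilizer is open (i.e. G x X -> X continuous, X discrete). *)
Definition discrete_module (X : zmodType) (act : G -> X -> X) : Prop :=
  [/\ (forall g x y, act g (x + y) = act g x + act g y),
      (forall x, act one x = x),
      (forall g h x, act (g ** h) x = act g (act h x)) &
      (forall x, open [set g | act g x = x])].

(* Homogeneous n-cochains: maps G^{n+1} -> X, with G^{n+1} = ('I_n.+1 -> G). *)
Definition equivariant (X : zmodType) (act : G -> X -> X) (n : nat)
  (phi : ('I_n.+1 -> G) -> X) : Prop :=
  forall g x, phi (fun i => g ** x i) = act g (phi x).

(* Continuity into the discrete module X = local constancy on the product G^{n+1}. *)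
Definition loc_const (X : Type) (n : nat) (phi : ('I_n.+1 -> G) -> X) : Prop :=
  forall x, exists U : 'I_n.+1 -> set G,
    (forall i, open (U i) /\ U i (x i)) /\
    (forall y, (forall i, U i (y i)) -> phi y = phi x).

Definition dco (X : zmodType) (n : nat) (phi : ('I_n.+1 -> G) -> X)
  : ('I_n.+2 -> G) -> X :=
  fun x => \sum_(i < n.+2)
    (if odd i then - phi (fun j => x (lift i j)) else phi (fun j => x (lift i j))).

Definition cocycle (X : zmodType) (act : G -> X -> X) (n : nat)
  (phi : ('I_n.+1 -> G) -> X) : Prop :=
  [/\ equivariant act phi, loc_const phi & forall x, dco phi x = 0].

Definition cohomologous (X : zmodType) (act : G -> X -> X) (n : nat)
  : (('I_n.+1 -> G) -> X) -> (('I_n.+1 -> G) -> X) -> Prop :=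
  match n with
  | 0 => fun phi psi => forall x, phi x = psi x
  | k.+1 => fun phi psi =>
      exists chi : ('I_k.+1 -> G) -> X,
        [/\ equivariant act chi, loc_const chi & forall x, phi x - psi x = dco chi x]
  end.

Definition left_transversal (H : set G) (I : finType) (L : I -> G) : Prop :=
  forall g, exists! i, H ((L i) ^-1g ** g).

(* pi : G -> H with pi (h g) = h pi(g); equivalently pi g = g r(g)^-1 for a
   system r of representatives of the right cosets H\G. *)
Definition right_retraction (H : set G) (pi : G -> G) : Prop :=
  forall g, H (pi g) /\ forall h, H h -> pi (h ** g) = h ** pi g.

(* Restriction to H: an H-cochain is represented by a function on G^{n+1}
   that is only ever evaluated on tuples in H^{n+1}. *)
Definition res_cochain (X : Type) (n : nat) (phi : ('I_n.+1 -> G) -> X)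
  : ('I_n.+1 -> G) -> X := fun x => phi x.

Definition push (X Y : Type) (f : X -> Y) (n : nat) (phi : ('I_n.+1 -> G) -> X)
  : ('I_n.+1 -> G) -> Y := fun x => f (phi x).

Definition cor_cochain (Y : zmodType) (act : G -> Y -> Y) (I : finType) (L : I -> G)
  (pi : G -> G) (n : nat) (psi : ('I_n.+1 -> G) -> Y) : ('I_n.+1 -> G) -> Y :=
  fun x => \sum_(i : I) act (L i) (psi (fun j => pi ((L i) ^-1g ** x j))).

Definition ftilde (X Y : zmodType) (actX : G -> X -> X) (actY : G -> Y -> Y)
  (I : finType) (L : I -> G) (f : X -> Y) : X -> Y :=
  fun x => \sum_(i : I) actY (L i) (f (actX ((L i) ^-1g) x)).

End Defs.

(* Unfolding the definitions, Cor(f_* Res sigma) - f~_* sigma evaluated at x is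
   sum_i L_i . f(sigma(pi(L_i^-1 x)) - sigma(L_i^-1 x)), the transfer of the
   H-equivariant cochain sigma o pi - sigma.  Since pi(h g) = h pi(g), the prism
     psi(y) = sum_m (-1)^(m+1) sigma(pi y_0, ..., pi y_m, y_m, ..., y_n)
   is H-equivariant, locally constant (pi is continuous because H is open), and
   d psi = sigma o pi - sigma because d sigma = 0.  The transfer of psi is then a
   continuous G-equivariant cochain whose coboundary is the difference.  In degree 0
   the cocycle sigma is constant and the difference vanishes. *)

From HB Require Import structures.
From mathcomp Require Import all_boot all_algebra.
From mathcomp Require monoid.
From mathcomp Require Import all_classical topology.
From mathcomp Require Import zify.

Set Implicit Arguments.
Unset Strict Implicit.
Unset Printing Implicit Defensive.

Import GRing.Theory.
Local Open Scope classical_set_scope.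
Local Open Scope ring_scope.

Local Notation "x ** y" := (monoid.mul x y) (at level 40, left associativity).
Local Notation "x ^-1g" := (monoid.inv x) (at level 3).

Lemma raddfB_of_raddfD (U V : zmodType) (f : U -> V) :
  {morph f : x y / x + y} -> {morph f : x y / x - y}.
Proof. by move=> fD x y; apply/eqP; rewrite eq_sym subr_eq -fD subrK. Qed.

Lemma lift_inord n (i : 'I_n.+2) t :
  (t < n.+1)%N -> lift i (inord t) = inord (bump i t) :> 'I_n.+2.
Proof.
move=> ltt; apply: val_inj; rewrite /= !inordK //.
by have := ltn_ord i; rewrite /bump; case: leqP => _; lia.
Qed.

Lemma dcoE (G : topGroupType) (X : zmodType) n (phi : ('I_n.+1 -> G) -> X) x :
  dco phi x = \sum_(i < n.+2) phi (fun j => x (lift i j)) *~ (-1) ^+ i.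
Proof.
apply: eq_bigr => i _; rewrite -signr_odd.
by case: odd; rewrite ?expr1 ?expr0 ?mulrN1z ?mulr1z.
Qed.

Lemma cocycle0_const (G : topGroupType) (X : zmodType) (phi : ('I_1 -> G) -> X) :
  (forall x, dco phi x = 0) -> forall y z, phi y = phi z.
Proof.
move=> phi_cocycle y z.
have := phi_cocycle (fun j : 'I_2 => if j == ord0 then z ord0 else y ord0).
rewrite dcoE big_ord_recl big_ord1 /= expr0 expr1 mulr1z mulrN1z => /eqP.
rewrite subr_eq0 => /eqP; congr (phi _ = phi _); apply: funext => j; by rewrite (ord1 j).
Qed.

Section TopologicalGroup.
Variable G : topGroupType.
Hypothesis mul_continuous : continuous (fun p : G * G => p.1 ** p.2).

Lemma mulg_continuousl (a : G) : continuous (fun y => a ** y).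
Proof.
move=> y; apply: (continuous_comp (f := fun y => (a, y)) (g := fun p : G * G => p.1 ** p.2)).
  by apply: cvg_pair; [exact: cvg_cst | exact: cvg_id].
exact: mul_continuous.
Qed.

Lemma mulg_continuousr (a : G) : continuous (fun y => y ** a).
Proof.
move=> y; apply: (continuous_comp (f := fun y => (y, a)) (g := fun p : G * G => p.1 ** p.2)).
  by apply: cvg_pair; [exact: cvg_id | exact: cvg_cst].
exact: mul_continuous.
Qed.

Variables (H : set G) (pi : G -> G).
Hypotheses (H_one : H monoid.one) (H_open : open H).
Hypothesis pi_retraction : right_retraction H pi.

(* Near b, pi is right multiplication by b^-1 pi(b), since H b is open. *)
Lemma retraction_continuous : continuous pi.
Proof.
move=> b; set c := b^-1g ** pi b.
have Hb : open_nbhs b [set y | H (y ** b^-1g)].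
  split; last by rewrite /= monoid.mulgV.
  by apply: open_comp H_open => y _; exact: mulg_continuousr.
have near_b : \forall y \near b, y ** c = pi y.
  apply: filterS (open_nbhs_nbhs Hb) => y /= Hy.
  by rewrite -[in RHS](monoid.mulgVK b y) (proj2 (pi_retraction b)) // monoid.mulgA.
apply: cvg_trans (near_eq_cvg near_b) _.
have -> : pi b = b ** c by rewrite /c monoid.mulgA monoid.mulgV monoid.mul1g.
exact: mulg_continuousr.
Qed.

End TopologicalGroup.

Section LocallyConstant.
Variable G : topGroupType.

Lemma loc_const_nbhs (X : Type) n (phi : ('I_n.+1 -> G) -> X) :
  (forall x, exists N : 'I_n.+1 -> set G, (forall i, nbhs (x i) (N i)) /\
     forall y, (forall i, N i (y i)) -> phi y = phi x) ->
  loc_const phi.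
Proof.
move=> phiN x; have [N [Nx phiNx]] := phiN x.
exists (fun i => (N i)°); split=> [i|y yN].
  by split; [exact: open_interior | exact: nbhs_singleton (nbhs_interior (Nx i))].
by apply: phiNx => i; exact: interior_subset.
Qed.

Lemma loc_const_comp (X Z : Type) n (phi : ('I_n.+1 -> G) -> X) (F : X -> Z) :
  loc_const phi -> loc_const (F \o phi).
Proof. by move=> phiU x; have [U [Ux phiUx]] := phiU x; exists U; split=> // y /phiUx /= ->. Qed.

Lemma loc_const_add (X : zmodType) n (phi psi : ('I_n.+1 -> G) -> X) :
  loc_const phi -> loc_const psi -> loc_const (phi \+ psi).
Proof.
move=> phiU psiV x; have [U [Ux phiUx]] := phiU x; have [V [Vx psiVx]] := psiV x.
exists (fun i => U i `&` V i); split=> [i|y UVy].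
  by have [oU ?] := Ux i; have [oV ?] := Vx i; split; [exact: openI | split].
by rewrite /= phiUx ?psiVx // => i; have [] := UVy i.
Qed.

Lemma loc_const_cst (X : Type) n (c : X) : loc_const (fun _ : 'I_n.+1 -> G => c).
Proof. by move=> x; exists (fun=> setT); split=> // i; split=> //; exact: openT. Qed.

Lemma loc_const_sum (X : zmodType) n (J : Type) (r : seq J) (P : pred J)
    (phi : J -> ('I_n.+1 -> G) -> X) :
  (forall j, loc_const (phi j)) -> loc_const (fun x => \sum_(j <- r | P j) phi j x).
Proof.
move=> phiU; elim: r => [|j r IHr].
  by under eq_fun do rewrite big_nil; exact: loc_const_cst.
under eq_fun do rewrite big_cons.
case: (P j); last exact: IHr.
exact: loc_const_add.
Qed.

Lemma loc_const_precomp (X : Type) m n (phi : ('I_m.+1 -> G) -> X)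
    (q : 'I_m.+1 -> G -> G) (s : 'I_m.+1 -> 'I_n.+1) :
  loc_const phi -> (forall j, continuous (q j)) ->
  loc_const (fun x => phi (fun j => q j (x (s j)))).
Proof.
move=> phiU qc; apply: loc_const_nbhs => x.
have [U [Ux phiUx]] := phiU (fun j => q j (x (s j))).
exists (fun i y => forall j, s j = i -> U j (q j y)); split=> [i|y yU].
  apply: (@filter_forall G 'I_m.+1 (fun j y => s j = i -> U j (q j y))) => j.
  have [oU Uj] := Ux j.
  have qU : \forall y \near x (s j), U j (q j y) by apply: (qc j); exact: open_nbhs_nbhs.
  case: (eqVneq (s j) i) => [sji|sji].
    by rewrite -sji; apply: filterS qU => y Uy _.
  by apply: nearW => y /eqP; rewrite (negPf sji).
by apply: phiUx => j; exact: yU.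
Qed.

End LocallyConstant.

(* In the prism computation cochains are evaluated on sequences [nat -> T], so that
   face maps are plain [bump j] and no ordinal casts are needed. *)
Definition on_prefix (T X : Type) n (phi : ('I_n -> T) -> X) (u : nat -> T) : X :=
  phi (fun i => u i).

Lemma eq_on_prefix (T X : Type) n (phi : ('I_n -> T) -> X) (u v : nat -> T) :
  {in gtn n, u =1 v} -> on_prefix phi u = on_prefix phi v.
Proof. by move=> uv; congr phi; apply: funext => i; exact/uv/ltn_ord. Qed.

Lemma mulrz_signK (V : zmodType) m : involutive (fun x : V => x *~ (-1) ^+ m).
Proof. by move=> x; rewrite -mulrzA -expr2 sqrr_sign. Qed.

Section Prism.
Variables (T : Type) (p : T -> T).

Definition map_prefix (m : nat) (u : nat -> T) (t : nat) : T :=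
  if (t < m)%N then p (u t) else u t.

Definition prism_simplex (m : nat) (u : nat -> T) (t : nat) : T :=
  if (t <= m)%N then p (u t) else u t.-1.

Lemma prism_simplex_bump_lt m j u : (j < m)%N ->
  prism_simplex m u \o bump j = prism_simplex m.-1 (u \o bump j).
Proof.
move=> ltjm; apply: funext => t; rewrite /prism_simplex /bump /=.
case: (leqP j t) => ?; rewrite ?add0n ?add1n /=; repeat case: leqP => ? /=; try lia.
all: first [done | congr (u _); lia | congr (p (u _)); lia].
Qed.

Lemma prism_simplex_bump_eq m u : prism_simplex m u \o bump m = map_prefix m u.
Proof.
apply: funext => t; rewrite /prism_simplex /map_prefix /bump /=.
by case: (leqP m t) => ?; rewrite ?add0n ?add1n /=; repeat case: leqP => ? /=; try lia.
Qed.

Lemma prism_simplex_bump_succ m u : prism_simplex m u \o bump m.+1 = map_prefix m.+1 u.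
Proof.
apply: funext => t; rewrite /prism_simplex /map_prefix /bump /=.
by case: (leqP m.+1 t) => ?; rewrite ?add0n ?add1n /=; repeat case: leqP => ? /=; try lia.
Qed.

Lemma prism_simplex_bump_gt m j u : (m.+1 < j)%N ->
  prism_simplex m u \o bump j = prism_simplex m (u \o bump j.-1).
Proof.
move=> ltmj; apply: funext => t; rewrite /prism_simplex /bump /=.
case: (leqP j t) => ?; rewrite ?add0n ?add1n /=; repeat case: leqP => ? /=; try lia.
all: first [done | congr (u _); lia | congr (p (u _)); lia].
Qed.

Variables (X : zmodType) (k : nat) (sigma : ('I_k.+2 -> T) -> X).
Local Notation s := (on_prefix sigma).

Hypothesis sigma_cocycle : forall v : nat -> T,
  \sum_(0 <= j < k.+3) s (v \o bump j) *~ (-1) ^+ j = 0.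

Definition prism (u : nat -> T) : X :=
  \sum_(0 <= m < k.+1) s (prism_simplex m u) *~ (-1) ^+ m.+1.

Lemma eq_prism u v : {in gtn k.+1, u =1 v} -> prism u = prism v.
Proof.
move=> uv; apply: eq_big_nat => m /andP[_ ltm]; congr (_ *~ _); apply: eq_on_prefix => t.
by rewrite inE /prism_simplex => ltt; case: leqP => ltmt; rewrite uv // inE; lia.
Qed.

Lemma prism_natural (a : T -> T) (alpha : {additive X -> X}) u :
  (forall t, p (a t) = a (p t)) -> (forall v, s (a \o v) = alpha (s v)) ->
  prism (a \o u) = alpha (prism u).
Proof.
move=> pa s_nat; rewrite /prism raddf_sum; apply: eq_bigr => m _.
rewrite raddfMz -s_nat; congr (s _ *~ _); apply: funext => t.
by rewrite /prism_simplex /=; case: ifP.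
Qed.

(* The cocycle relation on [prism_simplex m u], read through the face lemmas above. *)
Lemma map_prefix_succ_sub m u : (m < k.+2)%N ->
  s (map_prefix m.+1 u) - s (map_prefix m u) =
    (\sum_(0 <= j < m) s (prism_simplex m.-1 (u \o bump j)) *~ (-1) ^+ j) *~ (-1) ^+ m
  + (\sum_(m.+1 <= j < k.+2) s (prism_simplex m (u \o bump j)) *~ (-1) ^+ j) *~ (-1) ^+ m.+1.
Proof.
move=> ltmk; have := sigma_cocycle (prism_simplex m u).
rewrite (big_cat_nat _ (n := m)) //=; last by lia.
rewrite [X in _ + X]big_ltn; last by lia.
rewrite [X in _ + (_ + X)]big_ltn; last by lia.
rewrite prism_simplex_bump_eq prism_simplex_bump_succ.
under eq_big_nat => j /andP[_ ltjm] do rewrite prism_simplex_bump_lt //.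
rewrite [X in _ + (_ + (_ + X))]big_add1 /=.
under [X in _ + (_ + (_ + X))]eq_big_nat => j /andP[ltmj _] do
  rewrite prism_simplex_bump_gt // exprS mulN1r mulrNz.
rewrite sumrN exprS mulN1r !mulrNz -mulrzBl.
set A := \sum_(0 <= j < m) _; set B := \sum_(m.+1 <= j < k.+2) _.
move=> cocycle_eq; apply: (canRL (mulrz_signK m)); rewrite mulrzBl.
apply/eqP; rewrite eq_sym -subr_eq0 -cocycle_eq opprB -!addrA; apply/eqP.
by congr (_ + _); rewrite addrC -addrA.
Qed.

Lemma prism_coboundary u :
  \sum_(0 <= i < k.+2) prism (u \o bump i) *~ (-1) ^+ i = s (p \o u) - s u.
Proof.
have -> : s (p \o u) - s u = s (map_prefix k.+2 u) - s (map_prefix 0 u).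
  by congr (_ - _); apply: eq_on_prefix => t; rewrite inE /map_prefix => ->.
rewrite -(@telescope_sumr _ 0 k.+2 (fun m => s (map_prefix m u))) //=.
under [RHS]eq_big_nat => m /andP[_ ltm] do rewrite map_prefix_succ_sub //.
rewrite big_split /= [X in _ = X + _]big_nat_recl // [\sum_(0 <= j < 0) _]big_geq //.
rewrite mul0rz add0r [X in _ = _ + X]big_nat_recr //= [\sum_(k.+2 <= j < k.+2) _]big_geq //.
rewrite mul0rz addr0 -big_split /=.
rewrite /prism; under eq_bigr => i _ do rewrite mulrz_suml.
rewrite exchange_big_nat; apply: eq_big_nat => m /andP[_ ltm].
rewrite -mulrzDl -big_cat_nat //=; last by lia.
rewrite mulrz_suml.
by apply: eq_bigr => j _; rewrite mulrzAC.
Qed.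

End Prism.





Section Transfer.
Variables (G : topGroupType) (H : set G) (X Y : zmodType).
Variables (actX : G -> X -> X) (actY : G -> Y -> Y) (f : X -> Y).
Variables (I : finType) (L : I -> G).
Hypotheses (actY_additive : forall g, {morph actY g : x y / x + y})
  (f_additive : {morph f : x y / x + y}).
HB.instance Definition _ g :=
  GRing.isZmodMorphism.Build Y Y (actY g) (raddfB_of_raddfD (actY_additive g)).
HB.instance Definition _ :=
  GRing.isZmodMorphism.Build X Y f (raddfB_of_raddfD f_additive).

(* Corestriction of an H-equivariant cochain defined on all of G^(n+1); unlike
   [cor_cochain], no retraction onto H is needed. *)
Definition transfer n (phi : ('I_n.+1 -> G) -> X) (x : 'I_n.+1 -> G) : Y :=
  \sum_i actY (L i) (f (phi (fun j => (L i)^-1g ** x j))).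

Lemma transfer0 n x : transfer (fun _ : 'I_n.+1 -> G => 0) x = 0.
Proof. by apply: big1 => i _; rewrite !raddf0. Qed.

Lemma dco_transfer n (phi : ('I_n.+1 -> G) -> X) x :
  dco (transfer phi) x = transfer (dco phi) x.
Proof.
rewrite dcoE /transfer; under eq_bigr do rewrite mulrz_suml.
rewrite exchange_big; apply: eq_bigr => i _.
by rewrite dcoE !raddf_sum; apply: eq_bigr => l _; rewrite !raddfMz.
Qed.

Lemma cor_res_sub_ftilde n (pi : G -> G) (sigma : ('I_n.+1 -> G) -> X) x :
  equivariant actX sigma ->
  cor_cochain actY L pi (push f (res_cochain sigma)) x
    - push (ftilde actX actY L f) sigma x =
  transfer (fun y => sigma (fun j => pi (y j)) - sigma y) x.
Proof.
move=> sigma_eq; rewrite /transfer -sumrB; apply: eq_bigr => i _.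
by rewrite sigma_eq !raddfB.
Qed.

Lemma transfer_loc_const n (phi : ('I_n.+1 -> G) -> X) :
  continuous (fun p : G * G => p.1 ** p.2) -> loc_const phi -> loc_const (transfer phi).
Proof.
move=> mul_continuous phi_lc; apply: loc_const_sum => i.
apply: (loc_const_comp (fun v => actY (L i) (f v))).
apply: (loc_const_precomp (q := fun=> fun y => (L i)^-1g ** y) id phi_lc) => j.
exact: mulg_continuousl.
Qed.

Hypothesis H_inv : forall x, H x -> H x^-1g.
Hypothesis L_transversal : left_transversal H L.

Lemma transversal_perm g :
  exists2 tau : I -> I, injective tau & forall i, H ((L i)^-1g ** (g ** L (tau i))).
Proof.
have /boolp.choice[tau Htau] : forall i, exists j, H ((L i)^-1g ** (g ** L j)).
  move=> i; have [j [Hj _]] := L_transversal (g^-1g ** L i).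
  exists j; move: (H_inv Hj).
  by rewrite !monoid.invgM !monoid.invgK monoid.mulgA.
exists tau => // i1 i2 tau_eq.
have [j [_ uniq_j]] := L_transversal (g ** L (tau i1)).
by rewrite -(uniq_j i1 (Htau i1)) (uniq_j i2) // tau_eq.
Qed.

Hypotheses (actY_mul : forall g h y, actY (g ** h) y = actY g (actY h y))
  (f_H_linear : forall h x, H h -> f (actX h x) = actY h (f x)).

Lemma transfer_equivariant n (phi : ('I_n.+1 -> G) -> X) :
  (forall h x, H h -> phi (fun j => h ** x j) = actX h (phi x)) ->
  equivariant actY (transfer phi).
Proof.
move=> phi_eq g x; have [tau tau_inj Htau] := transversal_perm g.
rewrite /transfer raddf_sum [RHS](reindex_inj tau_inj); apply: eq_bigr => i _.
set h := (L i)^-1g ** (g ** L (tau i)); have Hh : H h := Htau i.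
have -> : (fun j => (L i)^-1g ** (g ** x j)) = (fun j => h ** ((L (tau i))^-1g ** x j)).
  by apply: funext => j; rewrite /h -!monoid.mulgA monoid.mulVKg.
by rewrite phi_eq // f_H_linear // /= -!actY_mul /h monoid.mulVKg.
Qed.

End Transfer.

Section RetractionHomotopy.
Variables (G : topGroupType) (H : set G) (X : zmodType) (actX : G -> X -> X).
Variables (pi : G -> G) (k : nat) (sigma : ('I_k.+2 -> G) -> X).

Definition retraction_homotopy (y : 'I_k.+1 -> G) : X :=
  prism pi sigma (fun t => y (inord t)).

Lemma dco_retraction_homotopy :
  (forall x, dco sigma x = 0) ->
  forall x, dco retraction_homotopy x = sigma (fun j => pi (x j)) - sigma x.
Proof.
move=> sigma_cocycle x.
have cocycle_seq v : \sum_(0 <= j < k.+3) on_prefix sigma (v \o bump j) *~ (-1) ^+ j = 0.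
  by have := sigma_cocycle (fun j => v j); rewrite dcoE big_mkord.
pose u t := x (inord t).
have face_u (i : 'I_k.+2) :
    retraction_homotopy (fun j => x (lift i j)) = prism pi sigma (u \o bump i).
  by apply: eq_prism => t; rewrite inE => ltt; rewrite /u /= lift_inord.
rewrite dcoE; under eq_bigr => i _ do rewrite face_u.
rewrite -(big_mkord xpredT (fun i => prism pi sigma (u \o bump i) *~ (-1) ^+ i)).
rewrite prism_coboundary //.
by congr (sigma _ - sigma _); apply: funext => j; rewrite /u /= inord_val.
Qed.

Lemma retraction_homotopy_loc_const :
  continuous pi -> loc_const sigma -> loc_const retraction_homotopy.
Proof.
move=> pi_continuous sigma_lc; apply: loc_const_sum => m.
pose q (j : 'I_k.+2) : G -> G := if (j <= m)%N then pi else id.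
pose r (j : 'I_k.+2) : 'I_k.+1 := inord (if (j <= m)%N then j : nat else j.-1).
have -> : (fun y : 'I_k.+1 -> G =>
    on_prefix sigma (prism_simplex pi m (fun t => y (inord t))) *~ (-1) ^+ m.+1) =
  (fun v => v *~ (-1) ^+ m.+1) \o (fun y => sigma (fun j => q j (y (r j)))).
  apply: funext => y; congr (sigma _ *~ _); apply: funext => j.
  by rewrite /prism_simplex /q /r; case: ifP.
apply: loc_const_comp; apply: loc_const_precomp => // j.
by rewrite /q; case: ifP => // _ y; exact: cvg_id.
Qed.

Hypothesis actX_additive : forall g, {morph actX g : x y / x + y}.

HB.instance Definition _ g :=
  GRing.isZmodMorphism.Build X X (actX g) (raddfB_of_raddfD (actX_additive g)).

Lemma retraction_homotopy_equivariant :
  right_retraction H pi -> equivariant actX sigma ->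
  forall h y, H h -> retraction_homotopy (fun j => h ** y j) = actX h (retraction_homotopy y).
Proof.
move=> pi_retraction sigma_eq h y Hh.
apply: (prism_natural (a := fun g => h ** g) (alpha := actX h)) => [g|v].
  exact: (proj2 (pi_retraction g)).
exact: sigma_eq.
Qed.

End RetractionHomotopy.

Theorem lemma6p4 (G : topGroupType) (H : set G) (X Y : zmodType)
  (actX : G -> X -> X) (actY : G -> Y -> Y) (f : X -> Y)
  (I : finType) (L : I -> G) (pi : G -> G)
  (n : nat) (sigma : ('I_n.+1 -> G) -> X) :
  profinite G ->
  open_subgroup H ->
  discrete_module actX ->
  discrete_module actY ->
  (forall x y, f (x + y) = f x + f y) ->
  (forall h x, H h -> f (actX h x) = actY h (f x)) ->
  left_transversal H L ->
  right_retraction H pi ->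
  cocycle actX sigma ->
  cohomologous actY
    (cor_cochain actY L pi (push f (res_cochain sigma)))
    (push (ftilde actX actY L f) sigma).
Proof.
move=> [mul_continuous _ _ _ _] [H_one _ H_inv H_open] [actX_add _ _ _]
  [actY_add _ actY_mul _] f_add f_H_linear L_transversal pi_retraction.
case=> sigma_eq sigma_lc sigma_cocycle.
have cor_sub := cor_res_sub_ftilde L actY_add f_add pi _ sigma_eq.
case: n sigma sigma_eq sigma_lc sigma_cocycle cor_sub =>
  [|k] sigma sigma_eq sigma_lc sigma_cocycle cor_sub.
  move=> x; apply/eqP; rewrite -subr_eq0 cor_sub; apply/eqP.
  rewrite -[RHS](transfer0 L actY_add f_add x); congr transfer; apply: funext => y.
  by rewrite (cocycle0_const sigma_cocycle (fun j => pi (y j)) y) subrr.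
exists (transfer actY f L (retraction_homotopy pi sigma)); split.
- apply: (transfer_equivariant actY_add H_inv L_transversal actY_mul f_H_linear).
  exact: retraction_homotopy_equivariant.
- apply: (transfer_loc_const _ _ _ mul_continuous).
  apply: (retraction_homotopy_loc_const _ sigma_lc).
  exact: (retraction_continuous mul_continuous H_one H_open pi_retraction).
- move=> x; rewrite cor_sub dco_transfer //; congr transfer; apply: funext => y.
  by rewrite dco_retraction_homotopy.
Qed.
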